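(* Let $X$ be a complex Banach space and let $\{S_h\},\{T_h\}\subset L(X)$, $h\in(0,1]$, be two bounded families. (i) If $\{S_h\},\{T_h\}$ are asymptotically equivalent, then they are asymptotically quasinilpotent equivalent. (ii) If $\lim_{h\to0}\|S_hT_h-T_hS_h\|=0$ and $\lim_{n\to\infty}\big(\limsup_{h\to0}\|(S_h-T_h)^{[n]}\|\big)^{1/n}=0$, then $\lim_{n\to\infty}\big(\limsup_{h\to0}\|(T_h-S_h)^{[n]}\|\big)^{1/n}=0$, so $\{S_h\},\{T_h\}$ are asymptotically quasinilpotent equivalent. (iii) If $\{A_h\}\subset L(X)$ is a bounded family, $\{S_h\},\{T_h\}$ are asymptotically quasinilpotent equivalent and $\lim_{h\to0}\|S_hA_h-A_hS_h\|=0$, it does not necessarily follow that $\lim_{h\to0}\|T_hA_h-A_hT_h\|=0$ (i.e. there exist bounded families for which the hypotheses hold and this conclusion fails).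
   Context: $L(X)$ is the algebra of bounded linear operators on $X$. A family $\{S_h\}_{h\in(0,1]}$ is bounded if $\sup_h\|S_h\|<\infty$. For $T,S\in L(X)$, $(T-S)^{[n]}=\sum_{k=0}^{n}(-1)^{n-k}\binom{n}{k}T^kS^{n-k}$. Families are asymptotically equivalent if $\lim_{h\to0}\|S_h-T_h\|=0$, and asymptotically quasinilpotent equivalent if $\lim_{n\to\infty}\big(\limsup_{h\to0}\|(S_h-T_h)^{[n]}\|\big)^{1/n}=\lim_{n\to\infty}\big(\limsup_{h\to0}\|(T_h-S_h)^{[n]}\|\big)^{1/n}=0$. *)

(* Bounded linear operators are maps X -> X satisfying Coquelicot's
   [is_linear] (additive, C-homogeneous, bounded). *)
From Stdlib Require Import Reals.
From Coquelicot Require Import Coquelicot.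
Open Scope R_scope.

Section Defs.
Context {X : CompleteNormedModule C_AbsRing}.

Definition opnorm (L : X -> X) : R :=
  real (Lub_Rbar (fun r => exists x : X, norm x <= 1 /\ r = norm (L x))).

(* (T - S)^[n] = sum_{k=0}^n (-1)^(n-k) binom(n,k) T^k S^(n-k) *)
Definition binom_diff (T S : X -> X) (n : nat) : X -> X :=
  fun x => sum_n (fun k =>
     scal (RtoC ((-1) ^ (n - k) * Binomial.C n k))
          (Nat.iter k T (Nat.iter (n - k) S x))) n.

Definition commutator (S T : X -> X) : X -> X :=
  fun x => minus (S (T x)) (T (S x)).

Definition bounded_family (F : R -> X -> X) : Prop :=
  (forall h, 0 < h <= 1 -> is_linear (F h)) /\
  exists M, forall h, 0 < h <= 1 -> opnorm (F h) <= M.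

Definition asym_equiv (S T : R -> X -> X) : Prop :=
  filterlim (fun h => opnorm (fun x => minus (S h x) (T h x)))
            (at_right 0) (locally 0).

Definition comm_vanish (S T : R -> X -> X) : Prop :=
  filterlim (fun h => opnorm (commutator (S h) (T h)))
            (at_right 0) (locally 0).

End Defs.

Definition limsup0 (f : R -> R) : Rbar :=
  Rbar_glb (fun y => exists d, 0 < d /\
     y = Lub_Rbar (fun r => exists h, 0 < h < d /\ h <= 1 /\ r = f h)).

Definition rbar_root (n : nat) (y : Rbar) : Rbar :=
  match y with
  | Finite r => if Rle_dec r 0 then Finite 0 else Finite (Rpower r (/ INR n))
  | p_infty => p_infty
  | m_infty => Finite 0
  end.

Definition rbar_seq_to0 (u : nat -> Rbar) : Prop :=
  forall eps : posreal, exists N : nat, forall n, (N <= n)%nat ->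
    Rbar_lt (Rbar_abs (u n)) eps.

Definition qn_to0 {X : CompleteNormedModule C_AbsRing}
  (S T : R -> X -> X) : Prop :=
  rbar_seq_to0 (fun n =>
    rbar_root n (limsup0 (fun h => opnorm (binom_diff (S h) (T h) n)))).

Definition asym_qn_equiv {X : CompleteNormedModule C_AbsRing}
  (S T : R -> X -> X) : Prop := qn_to0 S T /\ qn_to0 T S.

(* Since (P - Q)^[n+1] x = P ((P - Q)^[n] x) - (P - Q)^[n] (Q x), the n-th difference
   of operators of norm at most M has norm at most (2M)^n, and at most
   (2M)^(n-1) ||P - Q|| when n >= 1; this gives (i).
   For (ii), F_n := (-1)^n (Q - P)^[n] satisfies the mirrored recursion
   F_(n+1) x = F_n (P x) - Q (F_n x).  Comparing the two recursions, the commutators of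
   F_n with P and Q, and then (P - Q)^[n] - F_n, are bounded by n (2M+2)^n ||PQ - QP||
   and n^2 (2M+2)^n ||PQ - QP||; so when the commutator tends to 0, the limsup in h of
   ||(T - S)^[n]|| is at most that of ||(S - T)^[n]||.
   For (iii), on C^2 take S = 0, the nilpotent shift T (a, b) = (b, 0) and A (a, b) = (a, 0):
   all differences of order >= 2 vanish, S commutes with A, and TA - AT has norm 1. *)

From Stdlib Require Import Reals Lra Lia Classical.
From Coquelicot Require Import Coquelicot.
Open Scope R_scope.

Section AbelianGroupIdentities.
Context {G : AbelianGroup}.

Let minus_plus_opp (a b : G) : minus a b = plus a (opp b).
Proof. reflexivity. Qed.

Lemma minus_minus_swap (a b c d : G) :
  minus (minus a b) (minus c d) = minus (minus a c) (minus b d).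
Proof.
  rewrite !minus_plus_opp, !opp_plus, !opp_opp, <- !plus_assoc.
  f_equal; rewrite !plus_assoc; f_equal; apply plus_comm.
Qed.

Lemma minus_opp_opp (a b : G) : minus (opp a) (opp b) = minus b a.
Proof. rewrite !minus_plus_opp, opp_opp; apply plus_comm. Qed.

Lemma summation_by_parts_step (s u v w t1 t2 : G) :
  plus s u = minus t1 t2 ->
  plus (plus s (minus u v)) w = minus (plus t1 w) (plus t2 v).
Proof.
  intros H; rewrite !minus_plus_opp in *.
  rewrite plus_assoc, H, opp_plus, <- !plus_assoc; f_equal.
  rewrite (plus_comm w), !plus_assoc; f_equal; apply plus_comm.
Qed.

End AbelianGroupIdentities.

Section NormedModuleFacts.
Context {X : CompleteNormedModule C_AbsRing}.

(* Coquelicot's lemmas restated with the canonical structures of [X] itself: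
   the originals mention those of [CompleteNormedModule.NormedModule X], which
   [rewrite] does not identify with the ones appearing in our statements. *)
Lemma norm_zero' : norm (@zero X) = 0.
Proof. exact norm_zero. Qed.

Lemma minus_eq_zero' (u : X) : minus u u = @zero X.
Proof. exact (minus_eq_zero u). Qed.

Lemma norm_scal' (l : C) (x : X) : norm (scal l x) <= Cmod l * norm x.
Proof. exact (norm_scal l x). Qed.

Lemma linear_zero' (L : X -> X) : is_linear L -> L zero = zero.
Proof. exact (linear_zero L). Qed.

Lemma linear_opp' (L : X -> X) (x : X) : is_linear L -> L (opp x) = opp (L x).
Proof. exact (linear_opp L x). Qed.

Lemma linear_minus' (L : X -> X) (x y : X) :
  is_linear L -> L (minus x y) = minus (L x) (L y).
Proof. exact (linear_minus L x y). Qed.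

Lemma is_linear_zero' : is_linear (fun _ : X => @zero X).
Proof. exact is_linear_zero. Qed.

Lemma norm_minus_le (u v : X) : norm (minus u v) <= norm u + norm v.
Proof. rewrite <- (norm_opp v); exact (norm_triangle u (opp v)). Qed.

Lemma norm_minus_sym (u v : X) : norm (minus u v) = norm (minus v u).
Proof. rewrite <- opp_minus; exact (norm_opp (minus v u)). Qed.

Lemma norm_minus_le_via (w u v : X) :
  norm (minus u v) <= norm (minus u w) + norm (minus w v).
Proof. rewrite (minus_trans w); exact (norm_triangle (minus u w) (minus w v)). Qed.

Lemma norm_le_minus (u v : X) : norm u <= norm (minus u v) + norm v.
Proof.
  pose proof (norm_triangle_inv u v : Rabs (norm u - norm v) <= norm (minus u v)).
  pose proof (Rle_abs (norm u - norm v)); lra.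
Qed.

Lemma norm_minus_minus_le (a b c d e f : X) :
  norm (minus (minus a b) (minus c d)) <=
  norm (minus a e) + norm (minus e c) + (norm (minus b f) + norm (minus f d)).
Proof.
  rewrite minus_minus_swap.
  eapply Rle_trans; [apply norm_minus_le|].
  apply Rplus_le_compat; apply norm_minus_le_via.
Qed.

End NormedModuleFacts.

Lemma Lub_Rbar_ge (E : R -> Prop) (r : R) : E r -> Rbar_le r (Lub_Rbar E).
Proof. intros Hr; apply (proj1 (Lub_Rbar_correct E)); exact Hr. Qed.

Lemma Lub_Rbar_le (E : R -> Prop) (K : R) :
  (forall r, E r -> r <= K) -> Rbar_le (Lub_Rbar E) K.
Proof. intros HK; apply (proj2 (Lub_Rbar_correct E)); exact HK. Qed.

Lemma Rbar_le_finite (x : Rbar) (a b : R) :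
  Rbar_le a x -> Rbar_le x b -> x = Finite (real x).
Proof. destruct x; simpl; tauto. Qed.

Section OperatorNorm.
Context {X : CompleteNormedModule C_AbsRing}.

Definition bounded_by (L : X -> X) (K : R) : Prop :=
  forall x, norm (L x) <= K * norm x.

Lemma opnorm_spec (L : X -> X) (K : R) :
  (forall x : X, norm x <= 1 -> norm (L x) <= K) ->
  (forall x : X, norm x <= 1 -> norm (L x) <= opnorm L) /\ 0 <= opnorm L <= K.
Proof.
  intros HK; unfold opnorm.
  set (E := fun r => exists x : X, norm x <= 1 /\ r = norm (L x)).
  assert (H0 : E (norm (L zero))) by (exists zero; rewrite norm_zero'; split; [lra|reflexivity]).
  assert (Hle : Rbar_le (Lub_Rbar E) K)
    by (apply Lub_Rbar_le; intros r [x [Hx ->]]; auto).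
  assert (Hge := Lub_Rbar_ge E _ H0).
  pose proof (Rbar_le_finite _ _ _ Hge Hle) as Hfin.
  rewrite Hfin in Hge, Hle; simpl in Hge, Hle.
  split; [|split; [eapply Rle_trans; [apply (norm_ge_0 (L zero))|exact Hge]|exact Hle]].
  intros x Hx; assert (Hx' : E (norm (L x))) by (exists x; auto).
  assert (H := Lub_Rbar_ge E _ Hx').
  rewrite Hfin in H; exact H.
Qed.

Lemma bounded_by_unit_ball (L : X -> X) (K : R) :
  bounded_by L K -> 0 <= K -> forall x : X, norm x <= 1 -> norm (L x) <= K.
Proof.
  intros HL HK x Hx; eapply Rle_trans; [apply HL|].
  rewrite <- (Rmult_1_r K) at 2; apply Rmult_le_compat_l; assumption.
Qed.

Lemma opnorm_bounds (L : X -> X) (K : R) :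
  bounded_by L K -> 0 <= K -> 0 <= opnorm L <= K.
Proof. intros HL HK; exact (proj2 (opnorm_spec L K (bounded_by_unit_ball L K HL HK))). Qed.

Lemma bounded_by_opnorm (L : X -> X) : is_linear L -> bounded_by L (opnorm L).
Proof.
  intros HL x.
  destruct (linear_norm L HL) as [M [HM HLM]].
  destruct (opnorm_spec L M (bounded_by_unit_ball L M HLM (Rlt_le _ _ HM)))
    as [Hball _].
  destruct (Req_dec (norm x) 0) as [H0|H0].
  { assert (Hx : x = zero) by exact (norm_eq_zero x H0).
    rewrite H0, Hx, (linear_zero' L HL), norm_zero', Rmult_0_r; apply Rle_refl. }
  assert (Hr : 0 < norm x) by (destruct (norm_ge_0 x); [assumption|congruence]).
  set (r := norm x) in Hr |- *.
  set (y := scal (RtoC (/ r)) x).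
  assert (Hy : norm y <= 1).
  { unfold y; eapply Rle_trans; [apply norm_scal'|].
    rewrite Cmod_R, Rabs_pos_eq by (apply Rlt_le, Rinv_0_lt_compat, Hr).
    fold r; right; field; lra. }
  assert (Hxy : x = scal (RtoC r) y).
  { unfold y; rewrite scal_assoc.
    replace (mult (RtoC r) (RtoC (/ r))) with (@one C_Ring) by
      (change (RtoC 1 = Cmult (RtoC r) (RtoC (/ r))); rewrite <- RtoC_mult;
       f_equal; field; lra).
    symmetry; apply scal_one. }
  rewrite Hxy, (linear_scal L HL).
  eapply Rle_trans; [apply norm_scal'|].
  rewrite Cmod_R, Rabs_pos_eq, Rmult_comm by lra.
  apply Rmult_le_compat_r; [lra|apply Hball, Hy].
Qed.

Lemma is_linear_diff (A B : X -> X) :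
  is_linear A -> is_linear B -> is_linear (fun x => minus (A x) (B x)).
Proof.
  intros HA HB.
  assert (HoppB : is_linear (fun x => opp (B x)))
    by exact (is_linear_comp B opp HB is_linear_opp).
  exact (is_linear_comp (fun x => (A x, opp (B x))) (fun p => plus (fst p) (snd p))
    (is_linear_prod A _ HA HoppB) is_linear_plus).
Qed.

Lemma is_linear_commutator (A B : X -> X) :
  is_linear A -> is_linear B -> is_linear (commutator A B).
Proof. intros HA HB; apply is_linear_diff; apply is_linear_comp; assumption. Qed.

Lemma norm_le_opnorm (L : X -> X) (K : R) (x : X) :
  bounded_by L K -> 0 <= K -> norm x <= 1 -> norm (L x) <= opnorm L.
Proof. intros HL HK; apply (opnorm_spec L K (bounded_by_unit_ball L K HL HK)). Qed.

Lemma opnorm_le_of_unit_ball (L : X -> X) (K : R) :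
  (forall x : X, norm x <= 1 -> norm (L x) <= K) -> opnorm L <= K.
Proof. intros HK; exact (proj2 (proj2 (opnorm_spec L K HK))). Qed.

Lemma opnorm_ge0 (L : X -> X) : is_linear L -> 0 <= opnorm L.
Proof.
  intros HL; destruct (linear_norm L HL) as [K [HK HLK]].
  exact (proj1 (opnorm_bounds L K HLK (Rlt_le _ _ HK))).
Qed.

Lemma opnorm_ext (L L' : X -> X) :
  (forall x, norm (L x) = norm (L' x)) -> opnorm L = opnorm L'.
Proof.
  intros HLL'; unfold opnorm; f_equal; apply Lub_Rbar_eqset.
  intros r; split; intros [x [Hx ->]]; exists x; split; auto.
Qed.

End OperatorNorm.

Lemma sum_n_by_parts {K : Ring} {V : ModuleSpace K}
    (a b : nat -> K) (A : nat -> V) (n : nat) :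
  a O = opp (b O) ->
  (forall k, (k < n)%nat -> a (S k) = minus (b k) (b (S k))) ->
  a (S n) = b n ->
  sum_n (fun k => scal (a k) (A k)) (S n) =
  minus (sum_n (fun k => scal (b k) (A (S k))) n) (sum_n (fun k => scal (b k) (A k)) n).
Proof.
  intros Ha0 HaS Han.
  assert (Hpartial : forall m, (m <= n)%nat ->
    plus (sum_n (fun k => scal (a k) (A k)) m) (scal (b m) (A (S m))) =
    minus (sum_n (fun k => scal (b k) (A (S k))) m) (sum_n (fun k => scal (b k) (A k)) m)).
  { induction m as [|m IH]; intros Hm.
    - rewrite !sum_O, Ha0, scal_opp_l, plus_comm; reflexivity.
    - rewrite !sum_Sn, (HaS m ltac:(lia)), scal_minus_distr_r.
      apply (@summation_by_parts_step (ModuleSpace.AbelianGroup K V)), IH; lia. }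
  rewrite sum_Sn, Han; apply Hpartial; lia.
Qed.

Section BinomialDifference.
Context {X : CompleteNormedModule C_AbsRing}.

Lemma linear_sum_n (P : X -> X) (f : nat -> X) (n : nat) :
  is_linear P -> P (sum_n f n) = sum_n (fun k => P (f k)) n.
Proof.
  intros HP; induction n as [|n IH]; [rewrite !sum_O; reflexivity|].
  rewrite !sum_Sn, (linear_plus P HP), IH; reflexivity.
Qed.

Lemma binom_diff_0 (P Q : X -> X) (x : X) : binom_diff P Q 0 x = x.
Proof.
  unfold binom_diff; rewrite sum_O; simpl; rewrite C_n_0, Rmult_1_l.
  exact (scal_one x).
Qed.

(* Summation by parts: Pascal's rule relates the coefficients of orders n and n + 1. *)
Lemma binom_diff_S (P Q : X -> X) (n : nat) (x : X) : is_linear P ->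
  binom_diff P Q (S n) x = minus (P (binom_diff P Q n x)) (binom_diff P Q n (Q x)).
Proof.
  intros HP; unfold binom_diff; rewrite (linear_sum_n P) by exact HP.
  set (A := fun k => Nat.iter k P (Nat.iter (S n - k) Q x)).
  transitivity (minus
    (sum_n (fun k => scal (RtoC ((-1) ^ (n - k) * Binomial.C n k)) (A (S k))) n)
    (sum_n (fun k => scal (RtoC ((-1) ^ (n - k) * Binomial.C n k)) (A k)) n)).
  - refine (sum_n_by_parts (fun k => RtoC ((-1) ^ (S n - k) * Binomial.C (S n) k))
      _ A n _ _ _).
    + rewrite !Nat.sub_0_r, !C_n_0.
      replace ((-1) ^ S n * 1) with (- ((-1) ^ n * 1)) by (simpl; ring).
      exact (RtoC_opp _).
    + intros k Hk; rewrite <- (pascal n k Hk).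
      replace (S n - S k)%nat with (S (n - S k)) by lia.
      replace (n - k)%nat with (S (n - S k)) by lia.
      refine (eq_trans _ (RtoC_minus _ _ : _ = @minus C_AbelianGroup _ _)); f_equal; simpl; ring.
    + rewrite !Nat.sub_diag, !C_n_n; reflexivity.
  - f_equal.
    + apply sum_n_ext; intros k; rewrite (linear_scal P HP); reflexivity.
    + apply sum_n_ext_loc; intros k Hk; unfold A; f_equal.
      rewrite Nat.sub_succ_l, Nat.iter_succ_r by lia; reflexivity.
Qed.

Lemma binom_diff_at_zero (P Q : X -> X) (n : nat) :
  is_linear P -> is_linear Q -> binom_diff P Q n zero = zero.
Proof.
  intros HP HQ; induction n as [|n IH]; [apply binom_diff_0|].
  rewrite binom_diff_S, (linear_zero' Q HQ), IH, (linear_zero' P HP) by exact HP.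
  apply minus_eq_zero'.
Qed.

End BinomialDifference.

Section BinomialDifferenceBounds.
Context {X : CompleteNormedModule C_AbsRing}.

Lemma bounded_by_comp (A B : X -> X) (a b : R) :
  bounded_by A a -> bounded_by B b -> 0 <= a -> bounded_by (fun x => A (B x)) (a * b).
Proof.
  intros HA HB Ha x; eapply Rle_trans; [apply HA|].
  rewrite Rmult_assoc; apply Rmult_le_compat_l; [exact Ha|apply HB].
Qed.

Variables (P Q : X -> X) (M : R).
Hypotheses (HP : is_linear P) (HPM : bounded_by P M) (HQM : bounded_by Q M) (HM : 0 <= M).

Lemma bounded_by_diff_step (L : X -> X) (a : R) :
  bounded_by L a -> 0 <= a -> bounded_by (fun x => minus (P (L x)) (L (Q x))) (2 * M * a).
Proof.
  intros HL Ha x; eapply Rle_trans; [apply norm_minus_le|].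
  pose proof (bounded_by_comp P L M a HPM HL HM x).
  pose proof (bounded_by_comp L Q a M HL HQM Ha x).
  simpl in *; lra.
Qed.

Lemma binom_diff_bounded (n : nat) : bounded_by (binom_diff P Q n) ((2 * M) ^ n).
Proof.
  induction n as [|n IH]; intros x.
  - rewrite binom_diff_0; lra.
  - rewrite binom_diff_S by exact HP.
    apply (bounded_by_diff_step _ _ IH), pow_le; lra.
Qed.

Lemma binom_diff_S_bounded (e : R) (n : nat) :
  bounded_by (fun x => minus (P x) (Q x)) e -> 0 <= e ->
  bounded_by (binom_diff P Q (S n)) ((2 * M) ^ n * e).
Proof.
  intros He He0; induction n as [|n IH]; intros x.
  - rewrite binom_diff_S, !binom_diff_0 by exact HP; rewrite pow_O, Rmult_1_l; apply He.
  - rewrite binom_diff_S by exact HP.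
    replace ((2 * M) ^ S n * e) with (2 * M * ((2 * M) ^ n * e)) by (simpl; ring).
    apply (bounded_by_diff_step _ _ IH).
    apply Rmult_le_pos; [apply pow_le; lra|exact He0].
Qed.

End BinomialDifferenceBounds.

(* [alt_binom_diff P Q n] is (-1)^n (Q - P)^[n]; it equals (P - Q)^[n] when P and Q commute. *)
Fixpoint alt_binom_diff {X : CompleteNormedModule C_AbsRing} (P Q : X -> X) (n : nat) : X -> X :=
  match n with
  | O => fun x => x
  | S n => fun x => minus (alt_binom_diff P Q n (P x)) (Q (alt_binom_diff P Q n x))
  end.

Section AlternatingBinomialDifference.
Context {X : CompleteNormedModule C_AbsRing}.

Lemma norm_commutator_sym (A B : X -> X) (x : X) :
  norm (commutator A B x) = norm (commutator B A x).
Proof. apply norm_minus_sym. Qed.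

Lemma commutator_self_bounded (A : X -> X) (c : R) : 0 <= c -> bounded_by (commutator A A) c.
Proof.
  intros Hc x; unfold commutator.
  rewrite minus_eq_zero', norm_zero'.
  apply Rmult_le_pos; [exact Hc|apply norm_ge_0].
Qed.

Variables (P Q : X -> X) (M : R).
Hypotheses (HP : is_linear P) (HQ : is_linear Q).
Hypotheses (HPM : bounded_by P M) (HQM : bounded_by Q M) (HM : 0 <= M).

Lemma alt_binom_diff_sign (n : nat) :
  (forall x, alt_binom_diff P Q n x = binom_diff Q P n x) \/
  (forall x, alt_binom_diff P Q n x = opp (binom_diff Q P n x)).
Proof.
  induction n as [|n [IH|IH]].
  - left; intros x; rewrite binom_diff_0; reflexivity.
  - right; intros x; simpl; rewrite binom_diff_S, !IH, opp_minus by exact HQ; reflexivity.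
  - left; intros x; simpl; rewrite binom_diff_S, !IH, (linear_opp' Q _ HQ) by exact HQ.
    exact (minus_opp_opp _ _).
Qed.

Lemma norm_alt_binom_diff (n : nat) (x : X) :
  norm (alt_binom_diff P Q n x) = norm (binom_diff Q P n x).
Proof.
  destruct (alt_binom_diff_sign n) as [H|H]; rewrite H; [reflexivity|].
  exact (norm_opp (binom_diff Q P n x)).
Qed.

Lemma alt_binom_diff_minus (n : nat) (a b : X) :
  alt_binom_diff P Q n (minus a b) = minus (alt_binom_diff P Q n a) (alt_binom_diff P Q n b).
Proof.
  revert a b; induction n as [|n IH]; intros a b; [reflexivity|]; simpl.
  rewrite (linear_minus' P _ _ HP), IH, IH, (linear_minus' Q _ _ HQ).
  exact (minus_minus_swap _ _ _ _).
Qed.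

Lemma alt_binom_diff_bounded (n : nat) : bounded_by (alt_binom_diff P Q n) ((2 * M) ^ n).
Proof. intros x; rewrite norm_alt_binom_diff; exact (binom_diff_bounded Q P M HQ HQM HPM HM n x). Qed.

Lemma commutator_alt_binom_diff_bounded (W : X -> X) (c : R) (n : nat) :
  is_linear W -> bounded_by (commutator W P) c -> bounded_by (commutator W Q) c -> 0 <= c ->
  bounded_by (commutator W (alt_binom_diff P Q n)) (INR n * (2 * M + 2) ^ n * c).
Proof.
  intros HW HWP HWQ Hc; induction n as [|n IH]; intros x.
  - unfold commutator; simpl.
    rewrite minus_eq_zero', norm_zero'; lra.
  - set (F := alt_binom_diff P Q n) in IH.
    set (K := INR n * (2 * M + 2) ^ n) in IH.
    assert (HK : 0 <= K) by (apply Rmult_le_pos; [apply pos_INR|apply pow_le; lra]).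
    assert (HKc : 0 <= K * c) by (apply Rmult_le_pos; assumption).
    assert (HFM := alt_binom_diff_bounded n); fold F in HFM.
    assert (HpM : 0 <= (2 * M) ^ n) by (apply pow_le; lra).
    assert (H1 := bounded_by_comp _ _ _ _ IH HPM HKc x).
    assert (H2 := bounded_by_comp _ _ _ _ HFM HWP HpM x).
    assert (H3 := bounded_by_comp _ _ _ _ HWQ HFM Hc x).
    assert (H4 := bounded_by_comp _ _ _ _ HQM IH HM x).
    unfold commutator in *; cbn [alt_binom_diff]; fold F.
    rewrite (linear_minus' W _ _ HW).
    eapply Rle_trans; [apply (norm_minus_minus_le _ _ _ _ (F (W (P x))) (Q (W (F x))))|].
    unfold F; rewrite <- alt_binom_diff_minus, <- (linear_minus' Q _ _ HQ); fold F.
    assert (Hgrowth : 2 * M * K + 2 * (2 * M) ^ n <= INR (S n) * (2 * M + 2) ^ S n).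
    { unfold K; rewrite S_INR; simpl.
      assert ((2 * M) ^ n <= (2 * M + 2) ^ n) by (apply pow_incr; lra).
      assert (0 <= INR n) by apply pos_INR.
      assert (0 <= (2 * M + 2) ^ n) by (apply pow_le; lra).
      nra. }
    pose proof (Rmult_le_compat_r (c * norm x) _ _
      (Rmult_le_pos _ _ Hc (norm_ge_0 x)) Hgrowth).
    lra.
Qed.

Lemma binom_diff_alt_binom_diff_dist (c : R) (n : nat) (x : X) :
  bounded_by (commutator P Q) c -> 0 <= c ->
  norm (minus (binom_diff P Q n x) (alt_binom_diff P Q n x)) <=
  INR n ^ 2 * (2 * M + 2) ^ n * c * norm x.
Proof.
  intros HPQ Hc; revert x; induction n as [|n IH]; intros x.
  - rewrite binom_diff_0; simpl.
    rewrite minus_eq_zero', norm_zero'; lra.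
  - set (F := alt_binom_diff P Q n) in IH.
    set (E := binom_diff P Q n) in IH.
    set (D := INR n ^ 2 * (2 * M + 2) ^ n) in IH.
    set (K := INR n * (2 * M + 2) ^ n).
    assert (HQP : bounded_by (commutator Q P) c)
      by (intros y; rewrite norm_commutator_sym; apply HPQ).
    assert (HPF := commutator_alt_binom_diff_bounded P c n HP
      (commutator_self_bounded P c Hc) HPQ Hc x); fold F K in HPF.
    assert (HQF := commutator_alt_binom_diff_bounded Q c n HQ HQP
      (commutator_self_bounded Q c Hc) Hc x); fold F K in HQF.
    assert (HPD : norm (P (minus (E x) (F x))) <= M * (D * c * norm x)).
    { eapply Rle_trans; [apply HPM|]; apply Rmult_le_compat_l; [exact HM|apply IH]. }
    assert (HDQ : norm (minus (E (Q x)) (F (Q x))) <= D * c * (M * norm x)).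
    { eapply Rle_trans; [apply IH|]; apply Rmult_le_compat_l; [|apply HQM].
      apply Rmult_le_pos; [|exact Hc].
      apply Rmult_le_pos; [apply pow_le, pos_INR|apply pow_le; lra]. }
    rewrite binom_diff_S by exact HP; cbn [alt_binom_diff]; fold E F.
    eapply Rle_trans; [apply (norm_minus_minus_le _ _ _ _ (P (F x)) (F (Q x)))|].
    rewrite <- (linear_minus' P _ _ HP), (norm_minus_sym (F (Q x))).
    unfold commutator in HPF, HQF.
    assert (Hgrowth : 2 * M * D + 2 * K <= INR (S n) ^ 2 * (2 * M + 2) ^ S n).
    { unfold D, K; rewrite S_INR; simpl.
      assert (Hn : 0 <= INR n) by apply pos_INR.
      assert (Hp : 0 <= (2 * M + 2) ^ n) by (apply pow_le; lra).
      assert (0 <= INR n * (2 * M + 2) ^ n) by (apply Rmult_le_pos; assumption).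
      assert (0 <= M * (INR n * (INR n * (2 * M + 2) ^ n))) by
        (apply Rmult_le_pos; [exact HM|apply Rmult_le_pos; [exact Hn|assumption]]).
      assert (0 <= M * (INR n * (2 * M + 2) ^ n)) by (apply Rmult_le_pos; assumption).
      assert (0 <= M * (2 * M + 2) ^ n) by (apply Rmult_le_pos; assumption).
      nra. }
    pose proof (Rmult_le_compat_r (c * norm x) _ _
      (Rmult_le_pos _ _ Hc (norm_ge_0 x)) Hgrowth).
    lra.
Qed.

Lemma norm_binom_diff_le_swap (c : R) (n : nat) (x : X) :
  bounded_by (commutator P Q) c -> 0 <= c ->
  norm (binom_diff P Q n x) <= norm (binom_diff Q P n x) + INR n ^ 2 * (2 * M + 2) ^ n * c * norm x.
Proof.
  intros HPQ Hc.
  pose proof (binom_diff_alt_binom_diff_dist c n x HPQ Hc).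
  pose proof (norm_le_minus (binom_diff P Q n x) (alt_binom_diff P Q n x)).
  rewrite norm_alt_binom_diff in *; lra.
Qed.

End AlternatingBinomialDifference.

Definition sup_near0 (f : R -> R) (d : R) : Rbar :=
  Lub_Rbar (fun r => exists h, 0 < h < d /\ h <= 1 /\ r = f h).

Lemma limsup0_glb (f : R -> R) :
  Rbar_is_glb (fun y => exists d, 0 < d /\ y = sup_near0 f d) (limsup0 f).
Proof. exact (proj2_sig (Rbar_ex_glb _)). Qed.

Lemma limsup0_finite (f : R -> R) (B : R) :
  (forall h, 0 < h <= 1 -> 0 <= f h <= B) ->
  exists r, limsup0 f = Finite r /\ 0 <= r <= B.
Proof.
  intros Hf; destruct (limsup0_glb f) as [Hlow Hgreatest].
  assert (H0 : Rbar_le 0 (limsup0 f)).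
  { apply Hgreatest; intros y [d [Hd ->]].
    set (h := Rmin (d / 2) 1).
    assert (Hh : 0 < h < d /\ h <= 1).
    { unfold h; split; [split|apply Rmin_r].
      - apply Rmin_glb_lt; lra.
      - eapply Rle_lt_trans; [apply Rmin_l|lra]. }
    apply (Rbar_le_trans _ (f h)); [apply Hf; lra|].
    apply Lub_Rbar_ge; exists h; tauto. }
  assert (HB : Rbar_le (limsup0 f) B).
  { apply (Rbar_le_trans _ (sup_near0 f 1)); [apply Hlow; exists 1; split; [lra|reflexivity]|].
    apply Lub_Rbar_le; intros r [h [Hh [Hh1 ->]]]; apply Hf; lra. }
  pose proof (Rbar_le_finite _ _ _ H0 HB) as Hfin.
  rewrite Hfin in H0, HB; exists (real (limsup0 f)); simpl in *; auto.
Qed.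

Lemma at_right0_interval (P : R -> Prop) :
  at_right 0 P -> exists d, 0 < d /\ forall h, 0 < h < d -> P h.
Proof.
  intros [d Hd]; exists d; split; [apply cond_pos|]; intros h Hh.
  apply Hd; [|lra]; change (Rabs (h - 0) < d).
  rewrite Rminus_0_r, Rabs_pos_eq; lra.
Qed.

Lemma filterlim_at_right0_scal (c : R -> R) (K : R) :
  filterlim c (at_right 0) (locally 0) ->
  filterlim (fun h => K * c h) (at_right 0) (locally 0).
Proof.
  intros Hc; rewrite <- (Rmult_0_r K) at 2.
  exact (filterlim_comp _ _ _ c (fun z => scal K z) _ _ _ Hc (filterlim_scal_r K 0)).
Qed.

Lemma limsup0_le_of_le_add (f g c : R -> R) (B : R) :
  (forall h, 0 < h <= 1 -> 0 <= g h <= B) ->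
  filterlim c (at_right 0) (locally 0) ->
  (forall h, 0 < h <= 1 -> f h <= g h + c h) ->
  Rbar_le (limsup0 f) (limsup0 g).
Proof.
  intros Hg Hc Hfg.
  destruct (limsup0_finite g B Hg) as [r [Hr _]]; rewrite Hr.
  destruct (limsup0_glb g) as [_ Hgreatest]; rewrite Hr in Hgreatest.
  destruct (limsup0_glb f) as [Hlow _].
  assert (Heps : forall eps, 0 < eps -> Rbar_le (limsup0 f) (r + 2 * eps)).
  { intros eps Heps.
    assert (Hd1 : exists d1, 0 < d1 /\ Rbar_le (sup_near0 g d1) (r + eps)).
    { apply NNPP; intros Hnone.
      assert (Hlb : Rbar_le (r + eps) r).
      { apply Hgreatest; intros y [d [Hd ->]].
        apply Rbar_lt_le, Rbar_not_le_lt; intros Hle; apply Hnone; exists d; tauto. }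
      simpl in Hlb; lra. }
    destruct Hd1 as [d1 [Hd1 Hsup]].
    assert (Hsmall := proj1 (filterlim_locally c 0) Hc (mkposreal eps Heps)).
    destruct (at_right0_interval _ Hsmall) as [d2 [Hd2 Hcd]].
    apply (Rbar_le_trans _ (sup_near0 f (Rmin d1 d2))).
    { apply Hlow; exists (Rmin d1 d2); split; [apply Rmin_glb_lt; assumption|reflexivity]. }
    apply Lub_Rbar_le; intros y [h [Hh [Hh1 ->]]].
    assert (Hgh : Rbar_le (g h) (r + eps)).
    { apply (Rbar_le_trans _ (sup_near0 g d1)); [|exact Hsup].
      apply Lub_Rbar_ge; exists h; repeat split; try lra.
      eapply Rlt_le_trans; [apply Hh|apply Rmin_l]. }
    assert (Hch : Rabs (c h - 0) < eps).
    { apply (Hcd h); split; [lra|]; eapply Rlt_le_trans; [apply Hh|apply Rmin_r]. }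
    rewrite Rminus_0_r in Hch; simpl in Hgh.
    pose proof (Hfg h (conj (proj1 Hh) Hh1)); pose proof (Rle_abs (c h)); lra. }
  destruct (limsup0 f) as [a| |]; simpl in *; [|exact (Heps 1 Rlt_0_1)|exact I].
  apply Rle_plus_epsilon; intros eps Heps'.
  specialize (Heps (eps / 2) ltac:(lra)); lra.
Qed.

Lemma rbar_root_nonneg (n : nat) (x : Rbar) : Rbar_le 0 (rbar_root n x).
Proof.
  destruct x as [r| |]; simpl; [|exact I|lra].
  destruct (Rle_dec r 0); simpl; [lra|unfold Rpower; apply Rlt_le, exp_pos].
Qed.

Lemma rbar_root_le (n : nat) (x y : Rbar) :
  Rbar_le 0 x -> Rbar_le x y -> Rbar_le (rbar_root n x) (rbar_root n y).
Proof.
  intros Hx Hxy.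
  destruct y as [b| |]; [|case (rbar_root n x); simpl; tauto|].
  2: destruct x; simpl in *; tauto.
  destruct x as [a| |]; simpl in Hx, Hxy; try tauto.
  unfold rbar_root.
  destruct (Rle_dec a 0) as [Ha|Ha]; [apply (rbar_root_nonneg n b)|].
  destruct (Rle_dec b 0) as [Hb|Hb]; [lra|]; simpl.
  apply Rle_Rpower_l; [|lra].
  destruct n as [|n]; [simpl; rewrite Rinv_0; lra|].
  apply Rlt_le, Rinv_0_lt_compat, lt_0_INR; lia.
Qed.

Lemma rbar_seq_to0_root_le (u v : nat -> Rbar) (N : nat) :
  (forall n, (N <= n)%nat -> Rbar_le 0 (u n) /\ Rbar_le (u n) (v n)) ->
  rbar_seq_to0 (fun n => rbar_root n (v n)) ->
  rbar_seq_to0 (fun n => rbar_root n (u n)).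
Proof.
  intros Huv Hv eps; destruct (Hv eps) as [N' HN']; exists (max N N'); intros n Hn.
  destruct (Huv n ltac:(lia)) as [Hu0 Hle].
  specialize (HN' n ltac:(lia)).
  pose proof (rbar_root_nonneg n (u n)) as Hr0.
  pose proof (rbar_root_le n _ _ Hu0 Hle) as Hr.
  destruct (rbar_root n (u n)) as [a| |], (rbar_root n (v n)) as [b| |];
    simpl in *; try tauto.
  rewrite Rabs_pos_eq in * by lra; lra.
Qed.

Section Families.
Context {X : CompleteNormedModule C_AbsRing}.

Definition family_bounded_by (F : R -> X -> X) (M : R) : Prop :=
  forall h, 0 < h <= 1 -> is_linear (F h) /\ bounded_by (F h) M.

Lemma bounded_families_bounded_by (S T : R -> X -> X) :
  bounded_family S -> bounded_family T ->
  exists M, 0 <= M /\ family_bounded_by S M /\ family_bounded_by T M.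
Proof.
  intros [HSl [MS HMS]] [HTl [MT HMT]].
  exists (Rmax 0 (Rmax MS MT)); split; [apply Rmax_l|].
  split; intros h Hh; split; auto; intros x.
  - eapply Rle_trans; [apply bounded_by_opnorm; auto|].
    apply Rmult_le_compat_r; [apply norm_ge_0|].
    eapply Rle_trans; [apply HMS, Hh|]; eapply Rle_trans; [apply Rmax_l|apply Rmax_r].
  - eapply Rle_trans; [apply bounded_by_opnorm; auto|].
    apply Rmult_le_compat_r; [apply norm_ge_0|].
    eapply Rle_trans; [apply HMT, Hh|]; eapply Rle_trans; [apply Rmax_r|apply Rmax_r].
Qed.

Definition qn_seq (S T : R -> X -> X) (n : nat) : Rbar :=
  limsup0 (fun h => opnorm (binom_diff (S h) (T h) n)).

Lemma opnorm_binom_diff_bounds (S T : R -> X -> X) (M : R) (n : nat) (h : R) :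
  0 <= M -> family_bounded_by S M -> family_bounded_by T M -> 0 < h <= 1 ->
  0 <= opnorm (binom_diff (S h) (T h) n) <= (2 * M) ^ n.
Proof.
  intros HM HS HT Hh; destruct (HS h Hh) as [HSl HSM], (HT h Hh) as [_ HTM].
  apply opnorm_bounds; [apply binom_diff_bounded; assumption|apply pow_le; lra].
Qed.

Lemma qn_to0_of_qn_seq_le (S T : R -> X -> X) (M : R) (v : nat -> Rbar) (N : nat) :
  0 <= M -> family_bounded_by S M -> family_bounded_by T M ->
  (forall n, (N <= n)%nat -> Rbar_le (qn_seq S T n) (v n)) ->
  rbar_seq_to0 (fun n => rbar_root n (v n)) -> qn_to0 S T.
Proof.
  intros HM HS HT Hv; apply rbar_seq_to0_root_le with N; intros n Hn; split; [|exact (Hv n Hn)].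
  destruct (limsup0_finite _ _ (fun h => opnorm_binom_diff_bounds S T M n h HM HS HT)) as [r [Hr Hr0]].
  change (Rbar_le 0 (qn_seq S T n)); unfold qn_seq; rewrite Hr; simpl; lra.
Qed.

Lemma asym_equiv_qn_to0 (S T : R -> X -> X) :
  bounded_family S -> bounded_family T -> asym_equiv S T -> qn_to0 S T.
Proof.
  intros HSb HTb He.
  destruct (bounded_families_bounded_by S T HSb HTb) as [M [HM [HS HT]]].
  apply (qn_to0_of_qn_seq_le S T M (fun _ => Finite 0) 1 HM HS HT).
  - intros [|m] Hm; [lia|].
    set (e := fun h => opnorm (fun x => minus (S h x) (T h x))).
    destruct (limsup0_finite (fun _ => 0) 0) as [r [Hr Hr0]]; [intros; lra|].
    replace (Finite 0) with (limsup0 (fun _ => 0)) by (rewrite Hr; f_equal; lra).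
    apply (limsup0_le_of_le_add _ _ (fun h => (2 * M) ^ m * e h) 0); [intros; lra| |].
    + exact (filterlim_at_right0_scal e _ He).
    + intros h Hh; destruct (HS h Hh) as [HSl HSM], (HT h Hh) as [HTl HTM].
      assert (Hd := is_linear_diff _ _ HSl HTl).
      assert (He0 : 0 <= e h) by exact (opnorm_ge0 _ Hd).
      rewrite Rplus_0_l; apply opnorm_bounds.
      * exact (binom_diff_S_bounded _ _ M HSl HSM HTM HM (e h) m (bounded_by_opnorm _ Hd) He0).
      * apply Rmult_le_pos; [apply pow_le; lra|exact He0].
  - intros eps; exists O; intros n _; simpl.
    destruct (Rle_dec 0 0) as [_|H0]; [|lra]; simpl; rewrite Rabs_R0; apply cond_pos.
Qed.

Lemma comm_vanish_qn_to0_swap (S T : R -> X -> X) :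
  bounded_family S -> bounded_family T -> comm_vanish S T -> qn_to0 S T -> qn_to0 T S.
Proof.
  intros HSb HTb Hc Hq.
  destruct (bounded_families_bounded_by S T HSb HTb) as [M [HM [HS HT]]].
  apply (qn_to0_of_qn_seq_le T S M (qn_seq S T) 0 HM HT HS); [|exact Hq].
  intros n _; set (K := INR n ^ 2 * (2 * M + 2) ^ n).
  set (c := fun h => opnorm (commutator (S h) (T h))).
  apply (limsup0_le_of_le_add _ _ (fun h => K * c h) ((2 * M) ^ n)).
  - intros h Hh; exact (opnorm_binom_diff_bounds S T M n h HM HS HT Hh).
  - exact (filterlim_at_right0_scal c _ Hc).
  - intros h Hh; destruct (HS h Hh) as [HSl HSM], (HT h Hh) as [HTl HTM].
    assert (Hcl := is_linear_commutator _ _ HSl HTl).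
    assert (Hc0 : 0 <= c h) by exact (opnorm_ge0 _ Hcl).
    assert (HTS : bounded_by (commutator (T h) (S h)) (c h))
      by (intros x; rewrite norm_commutator_sym; apply bounded_by_opnorm, Hcl).
    apply opnorm_le_of_unit_ball; intros x Hx.
    eapply Rle_trans;
      [exact (norm_binom_diff_le_swap _ _ M HTl HSl HTM HSM HM (c h) n x HTS Hc0)|].
    apply Rplus_le_compat.
    + apply (norm_le_opnorm _ ((2 * M) ^ n)); [apply binom_diff_bounded; auto|apply pow_le; lra|exact Hx].
    + fold K; rewrite <- (Rmult_1_r (K * c h)) at 2; apply Rmult_le_compat_l; [|exact Hx].
      apply Rmult_le_pos; [apply Rmult_le_pos; [apply pow_le, pos_INR|apply pow_le; lra]|exact Hc0].
Qed.

End Families.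

Section ConstantFamilies.
Context {X : CompleteNormedModule C_AbsRing}.

Lemma bounded_family_const (L : X -> X) : is_linear L -> bounded_family (fun _ => L).
Proof. intros HL; split; [auto|exists (opnorm L); intros; lra]. Qed.


Lemma binom_diff_zero_right (P : X -> X) (n : nat) (x : X) :
  is_linear P -> binom_diff P (fun _ => zero) n x = Nat.iter n P x.
Proof.
  intros HP; induction n as [|n IH]; [apply binom_diff_0|].
  rewrite binom_diff_S, IH, binom_diff_at_zero by (exact HP || exact is_linear_zero').
  exact (minus_zero_r _).
Qed.

Lemma qn_to0_square_zero (P : X -> X) :
  is_linear P -> (forall x, P (P x) = zero) -> qn_to0 (fun _ => P) (fun _ _ => zero).
Proof.
  intros HP HPP.
  destruct (bounded_families_bounded_by (fun _ => P) (fun _ _ => @zero X)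
    (bounded_family_const P HP) (bounded_family_const _ is_linear_zero')) as [M [HM [HS HT]]].
  apply (qn_to0_of_qn_seq_le _ _ M (fun _ => Finite 0) 2 HM HS HT).
  - intros [|[|m]] Hm; [lia|lia|].
    destruct (limsup0_finite (fun h => opnorm (binom_diff P (fun _ => zero) (S (S m)))) 0)
      as [r [Hr Hr0]].
    + intros h _; apply opnorm_bounds; [|lra]; intros x.
      rewrite binom_diff_zero_right, Nat.iter_succ, Nat.iter_succ, HPP, norm_zero' by exact HP.
      lra.
    + unfold qn_seq; rewrite Hr; simpl; lra.
  - intros eps; exists O; intros n _; simpl.
    destruct (Rle_dec 0 0) as [_|H0]; [|lra]; simpl; rewrite Rabs_R0; apply cond_pos.
Qed.

Lemma comm_vanish_zero_right (P : X -> X) :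
  is_linear P -> comm_vanish (fun _ => P) (fun _ _ => zero).
Proof.
  intros HP; unfold comm_vanish.
  apply (filterlim_ext (fun _ => 0)); [|apply filterlim_const].
  intros h; apply Rle_antisym; [apply opnorm_ge0, is_linear_commutator; auto using is_linear_zero'|].
  apply opnorm_le_of_unit_ball; intros x _; unfold commutator.
  cbv beta; rewrite (linear_zero' P HP), minus_eq_zero', norm_zero'; lra.
Qed.

Lemma not_comm_vanish_const (A B : X -> X) (x : X) :
  is_linear A -> is_linear B -> norm x <= 1 -> 0 < norm (commutator A B x) ->
  ~ comm_vanish (fun _ => A) (fun _ => B).
Proof.
  intros HA HB Hx Hpos Hc.
  set (c := opnorm (commutator A B)).
  assert (Hcx : norm (commutator A B x) <= c).
  { assert (Hl := is_linear_commutator A B HA HB).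
    exact (norm_le_opnorm _ c x (bounded_by_opnorm _ Hl) (opnorm_ge0 _ Hl) Hx). }
  assert (Hc2 : 0 < c / 2) by lra.
  assert (Hsmall := proj1 (filterlim_locally (fun _ => c) 0) Hc (mkposreal _ Hc2)).
  destruct (at_right0_interval _ Hsmall) as [d [Hd Hball]].
  specialize (Hball (d / 2) ltac:(lra)); change (Rabs (c - 0) < c / 2) in Hball.
  rewrite Rminus_0_r, Rabs_pos_eq in Hball; lra.
Qed.

End ConstantFamilies.

Section ComplexPlane2.

Let C_CompleteSpace := CompleteNormedModule.CompleteSpace _ C_CompleteNormedModule.
Let C2_UniformSpace := prod_UniformSpace C_UniformSpace C_UniformSpace.

Definition C2_lim (F : ((C * C) -> Prop) -> Prop) : C * C :=
  (@lim C_CompleteSpace (filtermap fst F), @lim C_CompleteSpace (filtermap snd F)).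

Lemma C2_complete_cauchy (F : ((C * C) -> Prop) -> Prop) :
  ProperFilter F -> @cauchy C2_UniformSpace F ->
  forall eps : posreal, F (@ball C2_UniformSpace (C2_lim F) eps).
Proof.
  intros HF Hc eps.
  assert (Hfst : @cauchy C_UniformSpace (filtermap fst F)).
  { intros e; destruct (Hc e) as [x Hx]; exists (fst x).
    unfold filtermap; eapply filter_imp; [|exact Hx]; intros y [Hy _]; exact Hy. }
  assert (Hsnd : @cauchy C_UniformSpace (filtermap snd F)).
  { intros e; destruct (Hc e) as [x Hx]; exists (snd x).
    unfold filtermap; eapply filter_imp; [|exact Hx]; intros y [_ Hy]; exact Hy. }
  assert (H1 := @complete_cauchy C_CompleteSpace _ (filtermap_proper_filter _ _ fst F HF) Hfst eps).
  assert (H2 := @complete_cauchy C_CompleteSpace _ (filtermap_proper_filter _ _ snd F HF) Hsnd eps).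
  unfold filtermap in H1, H2.
  generalize (filter_and _ _ H1 H2); apply filter_imp; intros y [Hy1 Hy2]; split; assumption.
Qed.

Lemma C2_close_lim (F1 F2 : ((C * C) -> Prop) -> Prop) :
  filter_le F1 F2 -> filter_le F2 F1 -> @close C2_UniformSpace (C2_lim F1) (C2_lim F2).
Proof.
  intros H12 H21 eps; split; apply (@close_lim C_CompleteSpace);
    intros P HP; unfold filtermap in *; auto.
Qed.

Definition C2 : CompleteNormedModule C_AbsRing :=
  CompleteNormedModule.Pack C_AbsRing (C * C)
    (CompleteNormedModule.Class C_AbsRing (C * C)
      (NormedModule.class C_AbsRing (prod_NormedModule C_AbsRing C_NormedModule C_NormedModule))
      (CompleteSpace.Mixin C2_UniformSpace C2_lim C2_complete_cauchy C2_close_lim))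
    (C * C).

End ComplexPlane2.

Definition C2_shift (p : C2) : C2 := (snd p, RtoC 0).
Definition C2_proj1 (p : C2) : C2 := (fst p, RtoC 0).

Lemma is_linear_C2_shift : is_linear C2_shift.
Proof. exact (is_linear_prod _ _ is_linear_snd is_linear_zero). Qed.

Lemma is_linear_C2_proj1 : is_linear C2_proj1.
Proof. exact (is_linear_prod _ _ is_linear_fst is_linear_zero). Qed.

Lemma norm_C2 (a b : C) : norm ((a, b) : C2) = sqrt (Cmod a ^ 2 + Cmod b ^ 2).
Proof. reflexivity. Qed.

Lemma commutator_C2_shift_proj1 :
  commutator C2_shift C2_proj1 ((RtoC 0, RtoC 1) : C2) = ((RtoC (-1), RtoC 0) : C2).
Proof.
  unfold commutator, C2_shift, C2_proj1; simpl.
  change (((RtoC 0 - RtoC 1)%C, (RtoC 0 - RtoC 0)%C) = (RtoC (-1), RtoC 0)).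
  f_equal; rewrite <- RtoC_minus; f_equal; ring.
Qed.

Lemma asym_equiv_sym {X : CompleteNormedModule C_AbsRing} (S T : R -> X -> X) :
  asym_equiv S T -> asym_equiv T S.
Proof.
  apply filterlim_ext; intros h; apply opnorm_ext; intros x; apply norm_minus_sym.
Qed.

Lemma comm_vanish_sym {X : CompleteNormedModule C_AbsRing} (S T : R -> X -> X) :
  comm_vanish S T -> comm_vanish T S.
Proof.
  apply filterlim_ext; intros h; apply opnorm_ext; intros x; apply norm_commutator_sym.
Qed.

Lemma C2_commutation_not_transferred :
  exists (A S T : R -> C2 -> C2),
    bounded_family A /\ bounded_family S /\ bounded_family T /\
    asym_qn_equiv S T /\ comm_vanish S A /\ ~ comm_vanish T A.
Proof.
  exists (fun _ => C2_proj1), (fun _ _ => zero), (fun _ => C2_shift).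
  assert (HA := bounded_family_const _ is_linear_C2_proj1).
  assert (HS := bounded_family_const _ (@is_linear_zero' C2)).
  assert (HT := bounded_family_const _ is_linear_C2_shift).
  assert (HTS : qn_to0 (fun _ => C2_shift) (fun _ _ => zero))
    by (apply qn_to0_square_zero; [exact is_linear_C2_shift|reflexivity]).
  assert (HcTS := comm_vanish_zero_right _ is_linear_C2_shift).
  split; [exact HA|split; [exact HS|split; [exact HT|split; [split|split]]]].
  - exact (comm_vanish_qn_to0_swap _ _ HT HS HcTS HTS).
  - exact HTS.
  - exact (comm_vanish_sym _ _ (comm_vanish_zero_right _ is_linear_C2_proj1)).
  - apply (not_comm_vanish_const _ _ ((RtoC 0, RtoC 1) : C2) is_linear_C2_shift is_linear_C2_proj1).
    + rewrite norm_C2, !Cmod_R, Rabs_R0, Rabs_R1.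
      replace (0 ^ 2 + 1 ^ 2) with 1 by ring; rewrite sqrt_1; lra.
    + rewrite commutator_C2_shift_proj1, norm_C2, !Cmod_R, Rabs_R0.
      replace (Rabs (-1)) with 1 by (rewrite Rabs_left; lra).
      replace (1 ^ 2 + 0 ^ 2) with 1 by ring; rewrite sqrt_1; lra.
Qed.

Theorem proposition9 :
  (* (i) *)
  (forall (X : CompleteNormedModule C_AbsRing) (S T : R -> X -> X),
     bounded_family S -> bounded_family T ->
     asym_equiv S T -> asym_qn_equiv S T) /\
  (* (ii) *)
  (forall (X : CompleteNormedModule C_AbsRing) (S T : R -> X -> X),
     bounded_family S -> bounded_family T ->
     comm_vanish S T -> qn_to0 S T ->
     qn_to0 T S /\ asym_qn_equiv S T) /\
  (* (iii) *)
  (exists (X : CompleteNormedModule C_AbsRing) (A S T : R -> X -> X),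
     bounded_family A /\ bounded_family S /\ bounded_family T /\
     asym_qn_equiv S T /\ comm_vanish S A /\ ~ comm_vanish T A).
Proof.
  split; [|split].
  - intros X S T HS HT He; split; apply asym_equiv_qn_to0; auto.
    apply asym_equiv_sym, He.
  - intros X S T HS HT Hc Hq.
    assert (HTS := comm_vanish_qn_to0_swap S T HS HT Hc Hq).
    split; [exact HTS|split; assumption].
  - exists C2; exact C2_commutation_not_transferred.
Qed.
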